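(* Let $G$ be a connected finite simple graph with $n\ge2$ vertices. Then $$\bigcup_{H}\mathscr{H}_H(G)=\{0,1,\dots,h^+_{K_n}(G)\},$$ where $H$ ranges over all simple graphs on a fixed $n$-element vertex set, and $h^+_{K_n}(G)=\max\mathscr{H}_{K_n}(G)$ (the sum of distances over all pairs of vertices of $G$).
   Context: For finite simple graphs $H,G$ with $|V(H)|=|V(G)|$ and $G$ connected, the $H$-Hamiltonian spectrum of $G$ is $\mathscr{H}_H(G)=\{\sum_{\{x,y\}\in E(H)}\rho_G(f(x),f(y)) : f:V(H)\to V(G)\text{ bijection}\}$, where $\rho_G$ is the graph distance in $G$; $h^+_H(G)=\max\mathscr H_H(G)$. *)

From mathcomp Require Import all_boot.
Set Implicit Arguments. Unset Strict Implicit. Unset Printing Implicit Defensive.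

Definition simple_graph (T : finType) (e : rel T) : Prop :=
  symmetric e /\ irreflexive e.

Definition connected_graph (T : finType) (e : rel T) : Prop :=
  forall x y : T, connect e x y.

Fixpoint within (T : finType) (e : rel T) (k : nat) (x y : T) : bool :=
  if k is k'.+1 then within e k' x y || [exists z, e x z && within e k' z y]
  else x == y.

(* In a connected graph on #|T| vertices every distance is < #|T|, so the
   search range iota 0 #|T| suffices (returns #|T| if unreachable). *)
Definition gdist (T : finType) (e : rel T) (x y : T) : nat :=
  find (fun k => within e k x y) (iota 0 #|T|).

Definition Hsum (n : nat) (T : finType) (h : rel 'I_n) (e : rel T)
    (f : 'I_n -> T) : nat :=
  \sum_(i : 'I_n) \sum_(j : 'I_n | (i < j) && h i j) gdist e (f i) (f j).

Definition in_Hspectrum (n : nat) (T : finType) (h : rel 'I_n) (e : rel T)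
    (m : nat) : Prop :=
  exists f : 'I_n -> T, bijective f /\ m = Hsum h e f.

(* h^+_H(G) = max of the H-Hamiltonian spectrum: max over injective maps
   V(H) -> V(G), which are exactly the bijections when #|T| = n. *)
Definition hplus (n : nat) (T : finType) (h : rel 'I_n) (e : rel T) : nat :=
  \max_(f : {ffun 'I_n -> T} | injectiveb f) Hsum h e f.

Definition Kn {n : nat} : rel 'I_n := fun i j => i != j.

(** A connected graph has two vertices at every distance between 1 and its
    largest distance, so in the multiset of distances between the pairs of
    vertices, every value d > 1 has a companion value d - 1. For such a
    multiset every integer between 0 and the total sum is a sub-sum: remove a
    largest element w, which is at most one more than the sum of the rest,
    and recurse. Choosing H as the set of pairs realizing a sub-sum, under a
    bijection maximizing the K_n-sum, gives every value in [0, h^+_{K_n}(G)];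
    conversely an H-sum is bounded by the K_n-sum of the same bijection. *)

From mathcomp Require Import all_boot.

Set Implicit Arguments.
Unset Strict Implicit.
Unset Printing Implicit Defensive.

Section Distance.
Variables (T : finType) (e : rel T).

Lemma within_refl k x : within e k x x.
Proof. by elim: k => [|k IHk] /=; rewrite ?eqxx ?IHk. Qed.

Lemma within_path k x y :
  reflect (exists p, [/\ size p <= k, path e x p & last x p = y])
          (within e k x y).
Proof.
apply: (iffP idP).
  elim: k x => [|k IHk] x /=; first by move/eqP=> ->; exists [::].
  case/orP=> [/IHk [p [sp ep lp]]|/existsP [z /andP [exz /IHk [p [sp ep lp]]]]].
    by exists p; split=> //; apply: leqW.
  by exists (z :: p); rewrite /= exz.
elim: k x => [|k IHk] x [[|z p] [/= sp ep lp]] //=; first by rewrite lp eqxx.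
  by rewrite lp within_refl.
case/andP: ep => exz ep; apply/orP; right; apply/existsP; exists z.
by rewrite exz; apply: IHk; exists p.
Qed.

Hypothesis e_sym : symmetric e.

Lemma within_sym k x y : within e k x y -> within e k y x.
Proof.
case/within_path=> p [sp ep <-]; apply/within_path.
exists (rev (belast x p)); split; first by rewrite size_rev size_belast.
  by rewrite rev_path (@eq_path _ _ e) // => a b; rewrite e_sym.
by rewrite -[last _ _]/(last x (last x p :: rev (belast x p))) -rev_rcons
  -lastI rev_cons last_rcons.
Qed.

Hypothesis e_conn : connected_graph e.

Lemma has_within x y : has (fun k => within e k x y) (iota 0 #|T|).
Proof.
have /connectP [p ep lp] := e_conn x y.
case: (shortenP ep) lp => q eq_q uq _ lq.
apply/hasP; exists (size q).
  rewrite mem_iota add0n /=.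
  by have := max_card (mem (x :: q)); rewrite (card_uniqP uq).
by apply/within_path; exists q; split.
Qed.

Lemma gdist_lt x y : gdist e x y < #|T|.
Proof. by rewrite /gdist -[X in _ < X](size_iota 0) -has_find has_within. Qed.

Lemma gdist_within x y : within e (gdist e x y) x y.
Proof. by have := nth_find 0 (has_within x y); rewrite nth_iota ?gdist_lt. Qed.

Lemma gdist_le k x y : within e k x y -> gdist e x y <= k.
Proof.
move=> wk; rewrite leqNgt; apply/negP => lt_k.
have := before_find 0 lt_k.
by rewrite nth_iota ?add0n ?wk // (ltn_trans lt_k (gdist_lt x y)).
Qed.

Lemma gdist_sym x y : gdist e x y = gdist e y x.
Proof.
by apply/eqP; rewrite eqn_leq !gdist_le // within_sym // gdist_within.
Qed.

Lemma gdist_eq0 x y : (gdist e x y == 0) = (x == y).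
Proof.
apply/idP/eqP => [/eqP d0|->].
  by have := gdist_within x y; rewrite d0 => /eqP.
by rewrite -leqn0 gdist_le // within_refl.
Qed.

Lemma gdist_edge x z y : e x z -> gdist e x y <= (gdist e z y).+1.
Proof.
move=> exz; apply: gdist_le => /=; apply/orP; right.
by apply/existsP; exists z; rewrite exz gdist_within.
Qed.

Lemma gdist_step x y d : gdist e x y = d.+1 ->
  exists2 z, e x z & gdist e z y = d.
Proof.
move=> dxy; have := gdist_within x y; rewrite dxy /=.
case/orP=> [/gdist_le|/existsP [z /andP [exz wz]]]; first by rewrite dxy ltnn.
exists z => //; apply/eqP; rewrite eqn_leq gdist_le //=.
by rewrite -ltnS -dxy gdist_edge.
Qed.

End Distance.

Section SubsetSums.
Variables (I : finType) (w : I -> nat).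

Definition decr_closed (S : {set I}) :=
  forall p, p \in S -> 1 < w p -> exists2 q, q \in S & w q = (w p).-1.

Lemma decr_closed_sum_interval (S : {set I}) m :
  decr_closed S -> m <= \sum_(p in S) w p ->
  exists2 A : {set I}, A \subset S & \sum_(p in A) w p = m.
Proof.
elim: {S}_.+1 {-2}S (ltnSn #|S|) m => // k IHk S ltSk m clS.
have [->|[x0 x0S]] := set_0Vmem S.
  by rewrite big_set0 leqn0 => /eqP ->; exists set0; rewrite ?sub0set ?big_set0.
set p0 := [arg max_(p > x0 in S) w p].
have [p0S p0max] : p0 \in S /\ forall q, q \in S -> w q <= w p0.
  by rewrite /p0; case: arg_maxnP.
set S' := S :\ p0.
have ltS'k : #|S'| < k by move: ltSk; rewrite (cardsD1 p0) p0S.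
have sS'S : S' \subset S by apply: subsetDl.
(* a predecessor value is below w p0, so it is never carried by p0 itself *)
have pred_in_S' q r :
    q \in S -> 1 < w q -> w r = (w q).-1 -> r \in S -> r \in S'.
  move=> qS wq1 wr rS; rewrite in_setD1 rS andbT; apply/eqP => rp0.
  move: (p0max q qS); rewrite -rp0 wr.
  by case: (w q) wq1 => // a _; rewrite ltnn.
have clS' : decr_closed S'.
  move=> q; rewrite in_setD1 => /andP [_ qS] wq1.
  have [r rS wr] := clS q qS wq1.
  by exists r => //; apply: pred_in_S' wq1 wr rS.
have wp0_le : w p0 <= (\sum_(p in S') w p).+1.
  case: (leqP (w p0) 1) => [/leq_trans -> //|wp01].
  have [r rS wr] := clS p0 p0S wp01.
  have rS' := pred_in_S' p0 r p0S wp01 wr rS.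
  rewrite -(ltn_predK wp01) ltnS -wr.
  by rewrite (big_setD1 _ rS') leq_addr.
rewrite (big_setD1 _ p0S) -/S' => le_m.
have [le_m'|lt_m'] := leqP m (\sum_(p in S') w p).
  have [A AS' sumA] := IHk S' ltS'k m clS' le_m'.
  by exists A => //; apply: subset_trans sS'S.
have [|A AS' sumA] := IHk S' ltS'k (m - w p0) clS'; first by rewrite leq_subLR.
exists (p0 |: A); first by rewrite subUset sub1set p0S (subset_trans AS' sS'S).
rewrite big_setU1 /= ?sumA ?subnKC ?(leq_trans wp0_le) //.
by apply/negP => /(subsetP AS'); rewrite in_setD1 eqxx.
Qed.

End SubsetSums.

Section Spectrum.
Variables (n : nat) (T : finType) (e : rel T).

Definition upper_pairs : {set 'I_n * 'I_n} :=
  [set p : 'I_n * 'I_n | p.1 < p.2].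

Definition pair_weight (f : 'I_n -> T) (p : 'I_n * 'I_n) : nat :=
  gdist e (f p.1) (f p.2).

Definition pairs_graph (A : {set 'I_n * 'I_n}) : rel 'I_n :=
  fun i j => ((i, j) \in A) || ((j, i) \in A).

Lemma Hsum_pairs (h : rel 'I_n) (f : 'I_n -> T) :
  Hsum h e f =
  \sum_(p : 'I_n * 'I_n | (p.1 < p.2) && h p.1 p.2) pair_weight f p.
Proof. by rewrite /Hsum pair_big_dep. Qed.

Lemma Hsum_le_Kn (h : rel 'I_n) (f : 'I_n -> T) : Hsum h e f <= Hsum Kn e f.
Proof.
rewrite !Hsum_pairs [leqRHS](bigID (fun p => h p.1 p.2)) /=.
apply: leq_trans (leq_addr _ _); apply/eq_leq/eq_bigl => p; rewrite /Kn.
by case: ltnP => //= lt; rewrite neq_ltn lt.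
Qed.

Lemma Hsum_Kn_upper (f : 'I_n -> T) :
  Hsum Kn e f = \sum_(p in upper_pairs) pair_weight f p.
Proof.
rewrite Hsum_pairs; apply: eq_bigl => p; rewrite inE /Kn.
by case: ltnP => //= lt; rewrite neq_ltn lt.
Qed.

Lemma pairs_graph_simple (A : {set 'I_n * 'I_n}) :
  A \subset upper_pairs -> simple_graph (pairs_graph A).
Proof.
move=> sAU; split=> [i j|i]; first by rewrite /pairs_graph orbC.
by rewrite /pairs_graph orbb; apply/negP => /(subsetP sAU); rewrite inE ltnn.
Qed.

Lemma Hsum_pairs_graph (A : {set 'I_n * 'I_n}) (f : 'I_n -> T) :
  A \subset upper_pairs ->
  Hsum (pairs_graph A) e f = \sum_(p in A) pair_weight f p.
Proof.
move=> sAU; rewrite Hsum_pairs; apply: eq_bigl => -[i j] /=.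
rewrite /pairs_graph; have [ijA|ijA] := boolP ((i, j) \in A).
  by have := subsetP sAU _ ijA; rewrite inE => ->.
have [jiA|_] := boolP ((j, i) \in A); last by rewrite andbF.
have := subsetP sAU _ jiA; rewrite inE /= => lt_ji.
by rewrite andbT ltnNge (ltnW lt_ji).
Qed.

Lemma hplus_ge (h : rel 'I_n) (f : 'I_n -> T) :
  injective f -> Hsum h e f <= hplus h e.
Proof.
move=> f_inj; have -> : Hsum h e f = Hsum h e (finfun f).
  by apply: eq_bigr => i _; apply: eq_bigr => j _; rewrite !ffunE.
apply: leq_bigmax_cond; apply/injectiveP => i j; rewrite !ffunE; exact: f_inj.
Qed.

Lemma hplus_attained (h : rel 'I_n) : #|T| = n ->
  exists2 g : 'I_n -> T, bijective g & hplus h e = Hsum h e g.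
Proof.
move=> cardT; have n_card : n = #|T| by [].
pose g0 : {ffun 'I_n -> T} := [ffun i => enum_val (cast_ord n_card i)].
have g0_inj : injectiveb g0.
  by apply/injectiveP => i j; rewrite !ffunE => /enum_val_inj /cast_ord_inj.
rewrite /hplus (bigmax_eq_arg _ g0_inj).
case: arg_maxnP => // g /injectiveP g_inj _.
by exists g => //; apply: inj_card_bij; rewrite // cardT card_ord.
Qed.

Lemma pair_weight_decr_closed (f : 'I_n -> T) :
  symmetric e -> connected_graph e -> bijective f ->
  decr_closed (pair_weight f) upper_pairs.
Proof.
move=> e_sym e_conn [finv fK finvK] [i j]; rewrite inE /pair_weight /= => _.
case dij: (gdist e (f i) (f j)) => [|d] // d1.
have [z _ dz] := gdist_step e_conn dij.
have finvz_j : finv z != j.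
  apply/eqP => zj; move: dz; rewrite -zj finvK => dzz.
  by have := gdist_eq0 e_conn z z; rewrite eqxx dzz; case: (d) d1.
move: finvz_j; rewrite neq_ltn => /orP [lt|lt].
  by exists (finv z, j); rewrite ?inE //= finvK dz.
by exists (j, finv z); rewrite ?inE //= finvK gdist_sym.
Qed.

End Spectrum.

Theorem mainTheorem13 (n : nat) (T : finType) (e : rel T) :
  2 <= n -> #|T| = n -> simple_graph e -> connected_graph e ->
  forall m : nat,
    (exists h : rel 'I_n, simple_graph h /\ in_Hspectrum h e m)
    <-> m <= hplus (@Kn n) e.
Proof.
move=> _ cardT [e_sym _] e_conn m; split.
  case=> h [_ [f [f_bij ->]]].
  exact: leq_trans (Hsum_le_Kn e h f) (hplus_ge e Kn (bij_inj f_bij)).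
have [g g_bij ->] := hplus_attained e Kn cardT.
rewrite Hsum_Kn_upper => le_m.
have [A AU sumA] := decr_closed_sum_interval
  (pair_weight_decr_closed e_sym e_conn g_bij) le_m.
exists (pairs_graph A); split; first exact: pairs_graph_simple.
by exists g; split; rewrite // Hsum_pairs_graph.
Qed.
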